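(* Let $F$ be a contravariant functor from the category $\mathsf{Ring}$ of rings to the category $\mathsf{Set}$ of sets such that the restriction of $F$ to the full subcategory $\mathsf{CommRing}$ of commutative rings is isomorphic (as a functor) to $\operatorname{Spec}$. Then $F(\mathrm{M}_n(\mathbb{C})) = \varnothing$ for every $n \geq 3$.
   Context: All rings have an identity and ring homomorphisms preserve it. $\operatorname{Spec}\colon \mathsf{CommRing}\to\mathsf{Set}$ is the contravariant functor sending a commutative ring to its set of prime ideals and a homomorphism $f\colon R\to S$ to the map $P\mapsto f^{-1}(P)$. $\mathrm{M}_n(\mathbb{C})$ is the ring of $n\times n$ complex matrices. *)

(* Rings = pzRingType (rings with 1, zero ring allowed);
   ring homomorphisms = {rmorphism R -> S} (they preserve 1). *)
From HB Require Import structures.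
From mathcomp Require Import all_boot all_algebra.
From mathcomp Require Import Rstruct.
From mathcomp.real_closed Require Import complex.
Set Implicit Arguments. Unset Strict Implicit. Unset Printing Implicit Defensive.
Import GRing.Theory.
Local Open Scope ring_scope.

Record RingPresheaf := {
  Fobj : pzRingType -> Type;
  Fmap : forall (R S : pzRingType), {rmorphism R -> S} -> Fobj S -> Fobj R;
  Fmap_id : forall (R : pzRingType) (x : Fobj R), Fmap (@idfun R : {rmorphism R -> R}) x = x;
  Fmap_comp : forall (R S T : pzRingType) (f : {rmorphism R -> S})
      (g : {rmorphism S -> T}) (x : Fobj T),
      Fmap ((g \o f)%FUN : {rmorphism R -> T}) x = Fmap f (Fmap g x)
}.

Definition prime_ideal (R : comPzRingType) (P : R -> Prop) : Prop :=
  [/\ P 0,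
      (forall x y, P x -> P y -> P (x + y)),
      (forall r x, P x -> P (r * x)),
      ~ P 1
    & (forall x y, P (x * y) -> P x \/ P y)].

Definition Spec (R : comPzRingType) : Type := {P : R -> Prop | prime_ideal P}.

Definition restricts_to_Spec (F : RingPresheaf) : Prop :=
  exists eta : forall R : comPzRingType, Fobj F R -> Spec R,
    (forall R : comPzRingType, bijective (eta R)) /\
    (forall (R S : comPzRingType) (f : {rmorphism R -> S}) (x : Fobj F S),
        proj1_sig (eta R (@Fmap F R S f x)) = (fun r : R => proj1_sig (eta S x) (f r))).

From HB Require Import structures.
From mathcomp Require Import all_boot all_algebra.
From mathcomp Require Import Rstruct.
From mathcomp.real_closed Require Import complex.
From mathcomp Require Import perm zify.
From Stdlib Require Import ProofIrrelevance FunctionalExtensionality ClassicalEpsilon.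

(* A point x of F(M) pulls back along every ring map Z^I -> M, and a ring map
   Z^I -> M is the same thing as a decomposition of 1 into orthogonal idempotents
   (e_i)_(i in I).  A prime of Z^I misses exactly one indicator, so x selects one
   member of each decomposition, and naturality along the coarsening maps
   Z^J -> Z^I makes "p is a sum of members containing the selected one" a
   property of the idempotent p alone.  Thus x is a 0/1-valuation on idempotents
   of M giving the value 1 to exactly one member of each decomposition.  In
   M_n(K) with n >= 3 some diagonal unit e_kk gets the value 1; inside a 3x3
   corner through k this makes the complement of the corner false, so the
   valuation restricts to a colouring of the frames of a Kochen-Specker
   configuration of rank-one idempotents v w^T in M_3(Z), which cannot exist. *)

Set Implicit Arguments. Unset Strict Implicit. Unset Printing Implicit Defensive.
Import GRing.Theory.
Local Open Scope ring_scope.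

Lemma rmorph_ext (R S : pzRingType) (f g : {rmorphism R -> S}) : f =1 g -> f = g.
Proof.
case: f => f [a b]; case: g => g [a' b'] /= /functional_extensionality fg; subst g.
case: a a' b b' => [a] [a'] [b] [b'].
by rewrite (proof_irrelevance _ a a') (proof_irrelevance _ b b').
Qed.

Lemma sum_option (V : nmodType) (I : finType) (F : option I -> V) :
  \sum_o F o = F None + \sum_i F (Some i).
Proof.
rewrite (bigD1 None) //= (reindex_omap Some id) => [|[] //].
by congr (_ + _); apply: eq_bigl => i; rewrite eqxx.
Qed.

Lemma sum_bool_unique (I : finType) (b : I -> bool) :
  (exists! i, b i) -> (\sum_i b i = 1)%N.
Proof.
case=> i [bi bU]; rewrite (bigD1 i) //= bi big1 // => j ji.
by case bj: (b j) => //; rewrite (bU j bj) eqxx in ji.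
Qed.

Section IdempotentDecomposition.
Variable M : pzRingType.

Definition idempotent_decomposition (I : finType) (e : I -> M) : Prop :=
  (forall i j, e i * e j = if i == j then e i else 0) /\ \sum_i e i = 1.

Record decomposition (I : finType) := Decomposition {
  dec_fun :> I -> M;
  dec_idempotent : idempotent_decomposition dec_fun
}.

Lemma decomposition_ext (I : finType) (X Y : decomposition I) : X =1 Y -> X = Y.
Proof.
case: X Y => X hX [Y hY] /= /functional_extensionality XY; subst Y.
by rewrite (proof_irrelevance _ hX hY).
Qed.

Lemma decM (I : finType) (X : decomposition I) i j : X i * X j = if i == j then X i else 0.
Proof. by case: X => X []. Qed.

Lemma dec_sum (I : finType) (X : decomposition I) : \sum_i X i = 1.
Proof. by case: X => X []. Qed.

Definition coarsen_fun (I J : finType) (s : I -> J) (e : I -> M) (j : J) : M :=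
  \sum_(i | s i == j) e i.

Lemma coarsen_idempotent (I J : finType) (s : I -> J) (X : decomposition I) :
  idempotent_decomposition (coarsen_fun s X).
Proof.
split=> [j k|]; last first.
  rewrite /coarsen_fun -(dec_sum X) (exchange_big_dep xpredT) //=.
  by apply: eq_bigr => i _; rewrite (big_pred1 (s i)) // => j; rewrite eq_sym.
rewrite /coarsen_fun mulr_suml.
transitivity (\sum_(i | s i == j) (if s i == k then X i else 0)).
  apply: eq_bigr => i _; rewrite mulr_sumr big_mkcond /= (bigD1 i) //= big1 ?addr0.
    by rewrite decM eqxx; case: ifP.
  by move=> l li; rewrite decM [i == l]eq_sym (negbTE li); case: ifP.
have [<-|jk] := eqVneq j k; first by apply: eq_bigr => i ->.
by apply: big1 => i /eqP sij; rewrite sij (negbTE jk).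
Qed.

Definition coarsen (I J : finType) (s : I -> J) (X : decomposition I) : decomposition J :=
  Decomposition (coarsen_idempotent s X).

Lemma bool_decomposition_ext (X Y : decomposition bool) : X true = Y true -> X = Y.
Proof.
move=> XY; apply: decomposition_ext => -[] //.
have sumE (Z : decomposition bool) : Z false = 1 - Z true.
  by rewrite -(dec_sum Z) big_bool /= addrC addrK.
by rewrite !sumE XY.
Qed.

End IdempotentDecomposition.

Lemma complement_decomposition (R S : pzRingType) (I : finType)
    (f : {additive R -> S}) (e : I -> R) :
  (forall a b, f (a * b) = f a * f b) -> idempotent_decomposition e ->
  idempotent_decomposition (fun o : option I => if o is Some i then f (e i) else 1 - f 1).
Proof.
move=> fM [eM esum]; split=> [[i|] [j|] /=|]; last first.
  by rewrite sum_option -raddf_sum esum subrK.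
- by rewrite mulrBr mulr1 mulrBl mul1r -fM mulr1 subrr subr0.
- by rewrite mulrBl mul1r -fM mul1r subrr.
- by rewrite mulrBr mulr1 -fM mulr1 subrr.
- by rewrite -fM eM (inj_eq Some_inj); case: ifP; rewrite ?raddf0.
Qed.

Definition intfun (I : finType) : Type := {ffun I -> int}.
HB.instance Definition _ (I : finType) := GRing.PzRing.on (intfun I).
HB.instance Definition _ (I : finType) :=
  GRing.PzRing_hasCommutativeMul.Build (intfun I) (@ffun_mulC I int).

Section IntFun.
Variable I : finType.

Definition indicator (i : I) : intfun I := [ffun k => (k == i)%:R].

Lemma indicator_decomposition : idempotent_decomposition indicator.
Proof.
split=> [i j|].
  apply/ffunP=> k; rewrite !ffunE; have [<-|ij] := eqVneq i j; rewrite ffunE.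
    by case: (k == i); rewrite ?mulr1 ?mulr0.
  by have [->|_] := eqVneq k i; rewrite ?(negbTE ij) ?mulr0 ?mul0r.
apply/ffunP=> k; rewrite sum_ffunE !ffunE (bigD1 k) //= ffunE eqxx big1 ?addr0 //.
by move=> i /negbTE ki; rewrite ffunE eq_sym ki.
Qed.

Variable M : pzRingType.

Definition dec_eval (X : decomposition M I) (a : intfun I) : M := \sum_i X i *~ a i.

Lemma dec_eval_zmod_morphism X : zmod_morphism (dec_eval X).
Proof.
by move=> a b; rewrite /dec_eval -sumrB; apply: eq_bigr => i _; rewrite !ffunE mulrzBr.
Qed.

Lemma dec_eval_monoid_morphism X : monoid_morphism (dec_eval X).
Proof.
split=> [|a b].
  by rewrite /dec_eval -[RHS](dec_sum X); apply: eq_bigr => i _; rewrite ffunE mulr1z.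
rewrite /dec_eval mulr_suml; apply: eq_bigr => i _.
rewrite mulr_sumr (bigD1 i) //= big1 ?addr0.
  by rewrite mulrzAl mulrzAr decM eqxx !ffunE mulrC mulrzA.
by move=> j ji; rewrite mulrzAl mulrzAr decM eq_sym (negbTE ji) !mul0rz.
Qed.

HB.instance Definition _ X :=
  GRing.isZmodMorphism.Build (intfun I) M (dec_eval X) (dec_eval_zmod_morphism X).
HB.instance Definition _ X :=
  GRing.isMonoidMorphism.Build (intfun I) M (dec_eval X) (dec_eval_monoid_morphism X).

End IntFun.

Section IntFunComap.
Variables (I J : finType) (s : I -> J).

Definition intfun_comap (a : intfun J) : intfun I := [ffun i => a (s i)].

Lemma intfun_comap_zmod_morphism : zmod_morphism intfun_comap.
Proof. by move=> a b; apply/ffunP=> i; rewrite !ffunE. Qed.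

Lemma intfun_comap_monoid_morphism : monoid_morphism intfun_comap.
Proof. by split=> [|a b]; apply/ffunP=> i; rewrite !ffunE. Qed.

HB.instance Definition _ := GRing.isZmodMorphism.Build (intfun J) (intfun I)
  intfun_comap intfun_comap_zmod_morphism.
HB.instance Definition _ := GRing.isMonoidMorphism.Build (intfun J) (intfun I)
  intfun_comap intfun_comap_monoid_morphism.

Lemma intfun_comap_indicator j : intfun_comap (indicator j) = \sum_(i | s i == j) indicator i.
Proof.
apply/ffunP=> k; rewrite sum_ffunE !ffunE.
have [<-|skj] := eqVneq (s k) j.
  rewrite (bigD1 k) //= ffunE eqxx big1 ?addr0 // => i /andP[_ ik].
  by rewrite ffunE eq_sym (negbTE ik).
by rewrite big1 // => i /eqP sij; rewrite ffunE; case: eqP => // ki; rewrite ki sij eqxx in skj.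
Qed.

Lemma dec_eval_comap (M : pzRingType) (X : decomposition M I) :
  dec_eval X \o intfun_comap =1 dec_eval (coarsen s X).
Proof.
move=> a /=; rewrite /dec_eval /= /coarsen_fun.
under [RHS]eq_bigr do rewrite mulrz_suml.
rewrite (exchange_big_dep xpredT) //=.
by apply: eq_bigr => i _; rewrite (big_pred1 (s i)) ?ffunE // => j; rewrite eq_sym.
Qed.

End IntFunComap.

Lemma prime_ideal_sum (R : comPzRingType) (P : R -> Prop) (I : finType) (Q : pred I) (F : I -> R) :
  prime_ideal P -> (forall i, Q i -> P (F i)) -> P (\sum_(i | Q i) F i).
Proof. by case=> P0 PD _ _ _ PF; apply: (big_ind P) => // a b; apply: PD. Qed.

Lemma prime_ideal_decomposition (R : comPzRingType) (P : R -> Prop) (I : finType) (e : I -> R) :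
  prime_ideal P -> idempotent_decomposition e -> exists! i, ~ P (e i).
Proof.
move=> Pprime [eM esum]; have [P0 _ _ P1 Pmul] := Pprime.
have [i Pi] : exists i, ~ P (e i).
  apply: NNPP => noi; apply: P1; rewrite -esum; apply: prime_ideal_sum => // i _.
  by apply: NNPP => Pi; apply: noi; exists i.
exists i; split=> // j Pj; apply/eqP/negPn/negP => ji.
have : P (e i * e j) by rewrite eM (negbTE ji).
by case/Pmul; [exact: Pi | exact: Pj].
Qed.

Section Selection.
Variables (F : RingPresheaf) (eta : forall R : comPzRingType, Fobj F R -> Spec R).
Hypothesis eta_natural : forall (R S : comPzRingType) (f : {rmorphism R -> S}) (x : Fobj F S),
  proj1_sig (eta (Fmap f x)) = (fun r : R => proj1_sig (eta x) (f r)).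
Variables (M : pzRingType) (x : Fobj F M).

Definition dec_prime (I : finType) (X : decomposition M I) : intfun I -> Prop :=
  proj1_sig (eta (Fmap (dec_eval X) x)).

Definition selects (I : finType) (X : decomposition M I) (i : I) : Prop :=
  ~ dec_prime X (indicator i).

Lemma selects_unique (I : finType) (X : decomposition M I) : exists! i, selects X i.
Proof. exact: prime_ideal_decomposition (proj2_sig _) (indicator_decomposition I). Qed.

Lemma dec_prime_coarsen (I J : finType) (s : I -> J) (X : decomposition M I) a :
  dec_prime (coarsen s X) a <-> dec_prime X (intfun_comap s a).
Proof.
have E : ((dec_eval X \o intfun_comap s)%FUN : {rmorphism intfun J -> M}) =
    dec_eval (coarsen s X) by apply: rmorph_ext; exact: dec_eval_comap.
by rewrite /dec_prime -E Fmap_comp eta_natural.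
Qed.

Lemma selects_coarsen (I J : finType) (s : I -> J) (X : decomposition M I) j :
  selects (coarsen s X) j <-> exists2 i, s i = j & selects X i.
Proof.
rewrite /selects dec_prime_coarsen intfun_comap_indicator.
have [_ _ Pmul _ _] : prime_ideal (dec_prime X) := proj2_sig _.
split=> [Pj | [i sij Pi] PS].
  apply: NNPP => noi; apply: Pj; apply: prime_ideal_sum; first exact: proj2_sig.
  by move=> i /eqP sij; apply: NNPP => Pi; apply: noi; exists i.
apply: Pi; have := Pmul (indicator i) _ PS.
have [eM _] := indicator_decomposition I.
rewrite mulr_sumr (bigD1 i) /= ?sij ?eqxx // eM eqxx big1 ?addr0 //.
by move=> l /andP[_ li]; rewrite eM eq_sym (negbTE li).
Qed.

(* [p] holds at [x] when in some decomposition of 1 it is the sum of a subfamily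
   containing the selected member; by [holds_sum] this does not depend on the
   decomposition. *)
Definition holds (p : M) : Prop :=
  exists (I : finType) (X : decomposition M I) (S : pred I),
    \sum_(i | S i) X i = p /\ exists2 i, S i & selects X i.

Lemma holds_sum (I : finType) (X : decomposition M I) (S : pred I) :
  holds (\sum_(i | S i) X i) <-> exists2 i, S i & selects X i.
Proof.
split=> [[J [Y [T [YT [j Tj Yj]]]]]|]; last by exists I, X, S.
have XY : coarsen S X = coarsen T Y.
  apply: bool_decomposition_ext; rewrite /= /coarsen_fun.
  by under eq_bigl do rewrite eqb_id; under [RHS]eq_bigl do rewrite eqb_id; rewrite YT.
have : selects (coarsen T Y) true by apply/selects_coarsen; exists j.
by rewrite -XY => /selects_coarsen [i Si]; exists i.
Qed.

Lemma holds_member (I : finType) (X : decomposition M I) i : holds (X i) <-> selects X i.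
Proof.
have -> : X i = \sum_(j | j == i) X j by rewrite big_pred1_eq.
rewrite holds_sum; split=> [[j /eqP -> //]|]; by exists i.
Qed.

Lemma holds_unique (I : finType) (X : decomposition M I) : exists! i, holds (X i).
Proof.
have [i [Xi Xu]] := selects_unique X.
by exists i; split=> [|j /holds_member]; [exact/holds_member | exact: Xu].
Qed.

End Selection.

Lemma delta_mx_decomposition (K : pzRingType) (n : nat) :
  idempotent_decomposition (fun i : 'I_n => delta_mx i i : 'M[K]_n).
Proof.
split=> [i j|]; first by rewrite -mulmxE mul_delta_mx_cond; case: eqP => // ->.
by rewrite -idmxE scalar_mx_sum_delta; under [RHS]eq_bigr do rewrite scale1r.
Qed.

Section EmbedMatrix.
Variables (K : pzRingType) (m n : nat) (g : 'I_m -> 'I_n).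
Hypothesis g_inj : injective g.

Definition embed_mx (A : 'M[int]_m) : 'M[K]_n :=
  \sum_a \sum_b delta_mx (g a) (g b) *~ A a b.

Lemma embed_mx_zmod_morphism : zmod_morphism embed_mx.
Proof.
move=> A B; rewrite /embed_mx -sumrB; apply: eq_bigr => a _.
by rewrite -sumrB; apply: eq_bigr => b _; rewrite !mxE mulrzBr.
Qed.

HB.instance Definition _ :=
  GRing.isZmodMorphism.Build 'M[int]_m 'M[K]_n embed_mx embed_mx_zmod_morphism.

Lemma delta_mx_embed_mx a b B :
  delta_mx (g a) (g b) * embed_mx B = \sum_d delta_mx (g a) (g d) *~ B b d.
Proof.
rewrite /embed_mx mulr_sumr (bigD1 b) //= [X in _ + X]big1 ?addr0 => [|c cb].
  by rewrite mulr_sumr; apply: eq_bigr => d _; rewrite mulrzAr -mulmxE mul_delta_mx.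
rewrite mulr_sumr big1 // => d _.
by rewrite mulrzAr -mulmxE mul_delta_mx_0 ?mul0rz // (inj_eq g_inj) eq_sym.
Qed.

Lemma embed_mxM A B : embed_mx (A * B) = embed_mx A * embed_mx B.
Proof.
rewrite {2}/embed_mx mulr_suml; apply: eq_bigr => a _.
rewrite mulr_suml; under [RHS]eq_bigr do rewrite mulrzAl delta_mx_embed_mx mulrz_suml.
rewrite exchange_big /=; apply: eq_bigr => d _.
rewrite -mulmxE mxE mulrz_sumr; apply: eq_bigr => b _.
by rewrite mulrC mulrzA.
Qed.

End EmbedMatrix.

Lemma embed_delta_mx (K : pzRingType) (m n : nat) (g : 'I_m -> 'I_n) a b :
  embed_mx K g (delta_mx a b) = delta_mx (g a) (g b).
Proof.
rewrite /embed_mx (bigD1 a) //= (bigD1 b) //= mxE !eqxx mulr1z.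
rewrite big1 ?addr0 => [|b' b'b]; last by rewrite mxE (negbTE b'b) andbF mulr0z.
rewrite big1 ?addr0 // => a' a'a; rewrite big1 // => b' _.
by rewrite mxE (negbTE a'a) mulr0z.
Qed.

Section DualBases.
Variables (R : comPzRingType) (m : nat) (v w : 'I_m -> 'I_m -> R).
Hypothesis vw_dual : forall i j, \sum_a w i a * v j a = (i == j)%:R.

Definition dyad (i : 'I_m) : 'M[R]_m := \matrix_(a, b) (v i a * w i b).

Lemma dyad_decomposition : idempotent_decomposition dyad.
Proof.
split=> [i j|].
  apply/matrixP=> a b; rewrite -mulmxE !mxE.
  under eq_bigr do rewrite !mxE mulrA -[v i a * _ * _]mulrA.
  rewrite -mulr_suml -mulr_sumr vw_dual.
  by case: eqP => [->|_]; rewrite ?mxE ?mulr1 ?mulr0 ?mul0r.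
pose V : 'M[R]_m := \matrix_(a, i) v i a.
pose W : 'M[R]_m := \matrix_(i, b) w i b.
have WV : W *m V = 1%:M.
  by apply/matrixP=> i j; rewrite !mxE -vw_dual; apply: eq_bigr => a _; rewrite !mxE.
rewrite -idmxE -(mulmx1C WV); apply/matrixP=> a b.
by rewrite summxE !mxE; apply: eq_bigr => i _; rewrite !mxE.
Qed.

End DualBases.

Definition dot3 (w v : seq int) : int := w`_0 * v`_0 + w`_1 * v`_1 + w`_2 * v`_2.

(* Pairs (v, w) of integer vectors, standing for the rank-one idempotents v w^T of
   M_3(Z), and 28 frames of three of them. *)
Definition ks_vectors : seq (seq int * seq int) := [::
  ([:: 1; 0; 0], [:: 1; 0; 0]); ([:: 0; 0; 1], [:: -1; 1; 1]);
  ([:: 1; 0; 1], [:: 1; 0; 0]); ([:: 1; 1; 0], [:: 1; 0; 0]);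
  ([:: 1; 1; 1], [:: 1; 0; 0]); ([:: 0; 0; 1], [:: 0; 0; 1]);
  ([:: 0; 0; 1], [:: -1; 0; 1]); ([:: 0; 1; 0], [:: 0; 1; 0]);
  ([:: 0; 1; 0], [:: -1; 1; 0]); ([:: 0; 0; 1], [:: 0; -1; 1]);
  ([:: 0; 0; 1], [:: -1; -1; 1]); ([:: 0; 0; 1], [:: 1; -1; 1]);
  ([:: 0; 1; 1], [:: 0; 1; 0]); ([:: 0; 1; 1], [:: -1; 1; 0]);
  ([:: 1; 1; 0], [:: 0; 1; 0]); ([:: 1; 1; 1], [:: 0; 1; 0]);
  ([:: 1; 0; 0], [:: 1; -1; 0]); ([:: 1; 0; 1], [:: 1; -1; 0]);
  ([:: 0; 1; 0], [:: -1; 1; 1]); ([:: 1; 0; 0], [:: 1; -1; -1]);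
  ([:: 1; 1; 1], [:: -1; 1; 1]); ([:: 0; 1; 0], [:: 0; 1; -1]);
  ([:: 0; 1; 0], [:: 1; 1; -1]); ([:: 0; 1; 1], [:: 0; 0; 1]);
  ([:: 0; 1; 1], [:: -1; 0; 1]); ([:: 0; 1; 0], [:: -1; 1; -1]);
  ([:: 1; 0; 1], [:: 0; 0; 1]); ([:: 1; 1; 1], [:: 0; 0; 1]);
  ([:: 1; 0; 0], [:: 1; 0; -1]); ([:: 1; 1; 0], [:: 1; 0; -1]);
  ([:: 1; 0; 1], [:: 0; -1; 1]); ([:: 1; 1; 0], [:: 0; 1; -1]);
  ([:: 1; 0; 0], [:: 1; 1; -1]); ([:: 1; 1; 1], [:: 1; 1; -1]);
  ([:: 1; 0; 0], [:: 1; -1; 1]); ([:: 1; 1; 1], [:: 1; -1; 1])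
].

Definition ks_frames : seq (nat * nat * nat) := [::
  (5, 7, 0); (6, 7, 2); (5, 8, 3); (6, 8, 4);
  (9, 12, 0); (10, 12, 2); (11, 13, 3); (9, 13, 4);
  (5, 16, 14); (9, 16, 15); (1, 17, 14); (6, 17, 15);
  (21, 23, 0); (22, 24, 2); (25, 23, 3); (21, 24, 4);
  (7, 28, 26); (21, 28, 27); (18, 26, 29); (8, 29, 27);
  (12, 32, 30); (23, 34, 31); (24, 30, 33); (13, 31, 35);
  (19, 26, 14); (28, 30, 15); (16, 31, 27); (17, 29, 20)
].

Definition ks_vector (k : nat) : seq int * seq int := nth ([::], [::]) ks_vectors k.

Definition ks_mx (k : nat) : 'M[int]_3 :=
  \matrix_(a, b) ((ks_vector k).1`_a * (ks_vector k).2`_b).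

Definition frame_index (t : nat * nat * nat) (i : nat) : nat := nth 0 [:: t.1.1; t.1.2; t.2] i.

Definition dual_frame (t : nat * nat * nat) : bool :=
  all (fun i => all (fun j =>
    dot3 (ks_vector (frame_index t i)).2 (ks_vector (frame_index t j)).1 == (i == j)%:R)
  (iota 0 3)) (iota 0 3).

Lemma ks_frames_dual : all dual_frame ks_frames.
Proof. by vm_compute. Qed.

Lemma ks_frame_decomposition t : t \in ks_frames ->
  idempotent_decomposition (fun i : 'I_3 => ks_mx (frame_index t i)).
Proof.
move=> /(allP ks_frames_dual) /allP dual.
apply: (dyad_decomposition (v := fun i a => (ks_vector (frame_index t i)).1`_a))
  => [i j].
have := dual i; rewrite mem_iota add0n leq0n ltn_ord => /(_ isT) /allP /(_ j).
rewrite mem_iota add0n leq0n ltn_ord => /(_ isT) /eqP <-.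
by rewrite !big_ord_recl big_ord0 addr0 addrA.
Qed.

Lemma ks_uncolourable (c : nat -> nat) : (forall k, c k <= 1)%N ->
  ~ (forall t, t \in ks_frames -> (c t.1.1 + c t.1.2 + c t.2 = 1)%N).
Proof.
move=> c_le1 colouring.
have : all (fun t => c t.1.1 + c t.1.2 + c t.2 == 1)%N ks_frames.
  by apply/allP => t /colouring ->.
have : all (fun k => c k <= 1)%N (iota 0 36) by apply/allP => k _; exact: c_le1.
rewrite /= => bounds frames.
repeat case/andP: bounds => ? bounds; repeat case/andP: frames => /eqP ? frames.
lia.
Qed.

Section KochenSpecker.
Variables (F : RingPresheaf) (eta : forall R : comPzRingType, Fobj F R -> Spec R).
Hypothesis eta_natural : forall (R S : comPzRingType) (f : {rmorphism R -> S}) (x : Fobj F S),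
  proj1_sig (eta (Fmap f x)) = (fun r : R => proj1_sig (eta x) (f r)).
Variables (K : pzRingType) (n : nat) (x : Fobj F 'M[K]_n) (g : 'I_3 -> 'I_n).
Hypothesis g_inj : injective g.
Hypothesis holds_g0 : holds eta x (delta_mx (g ord0) (g ord0)).

Let embed_frame (e : 'I_3 -> 'M[int]_3) (he : idempotent_decomposition e) :
    decomposition 'M[K]_n (option 'I_3) :=
  Decomposition (complement_decomposition (embed_mxM K g_inj) he).

Lemma embed_complement_not_holds : ~ holds eta x (1 - embed_mx K g 1).
Proof.
have [o [_ o_unique]] := holds_unique eta_natural x
  (embed_frame (delta_mx_decomposition int 3)).
have h0 : holds eta x (embed_mx K g (delta_mx ord0 ord0)) by rewrite embed_delta_mx.
by move=> hN; have := o_unique (Some ord0) h0; rewrite (o_unique None hN).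
Qed.

Lemma ks_frame_holds_unique t : t \in ks_frames ->
  exists! i : 'I_3, holds eta x (embed_mx K g (ks_mx (frame_index t i))).
Proof.
move=> t_frame; have [[i|] [hi i_unique]] :=
  holds_unique eta_natural x (embed_frame (ks_frame_decomposition t_frame)).
  by exists i; split=> // j hj; case: (i_unique (Some j) hj).
by case: (embed_complement_not_holds hi).
Qed.

Definition ks_colour (k : nat) : bool :=
  excluded_middle_informative (holds eta x (embed_mx K g (ks_mx k))).

Lemma ks_colourP k : reflect (holds eta x (embed_mx K g (ks_mx k))) (ks_colour k).
Proof. by rewrite /ks_colour; case: excluded_middle_informative => h; constructor. Qed.

Lemma ks_colour_frame t : t \in ks_frames ->
  (ks_colour t.1.1 + ks_colour t.1.2 + ks_colour t.2 = 1)%N.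
Proof.
move=> t_frame; have [i [hi i_unique]] := ks_frame_holds_unique t_frame.
rewrite -(@sum_bool_unique _ (fun i : 'I_3 => ks_colour (frame_index t i))).
  by rewrite !big_ord_recl big_ord0 addn0 addnA.
by exists i; split=> [|j /ks_colourP /i_unique]; first exact/ks_colourP.
Qed.

Lemma kochen_specker : False.
Proof. exact: ks_uncolourable (fun k => leq_b1 (ks_colour k)) ks_colour_frame. Qed.

End KochenSpecker.

Lemma injection_through (m n : nat) (k : 'I_n) (le_mn : (m.+1 <= n)%N) :
  exists2 g : 'I_m.+1 -> 'I_n, injective g & g ord0 = k.
Proof.
exists (tperm (widen_ord le_mn ord0) k \o widen_ord le_mn); last by rewrite /= tpermL.
apply: inj_comp; first exact: perm_inj.
by move=> a b /(congr1 val) /= /val_inj.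
Qed.

Theorem theorem1p1 (F : RingPresheaf) (hF : restricts_to_Spec F) (n : nat) (hn : (3 <= n)%N) :
  Fobj F 'M[complex Rdefinitions.R]_n -> False.
Proof.
move=> x; have [eta [_ eta_natural]] := hF.
pose D := Decomposition (delta_mx_decomposition (complex Rdefinitions.R) n).
have [k [Dk _]] := selects_unique eta x D.
have [g g_inj g0] := injection_through k hn.
apply: (kochen_specker eta_natural g_inj).
by rewrite g0; apply/(holds_member eta_natural x D).
Qed.
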